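(* Let $P,V$ be sets, $O\subseteq P$ a set of collaborating adversaries, $o$ a new principal, $R\subseteq P\times V\times P\times K$ and $k_0\in K$. Then $$\mathrm{Merge}(f^*_R(k_0))\subseteq f^*_{\mathrm{Merge}(R)}(\mathrm{Merge}(k_0)).$$
   Context: $K=2^{P\times V}$. For $R\subseteq P\times V\times P\times K$, $f_R(k)=k\cup\{(p_a,v): (p_b,v)\in k,\ k_a\subseteq k,\ (p_b,v,p_a,k_a)\in R\text{ for some }p_b, k_a\}$ and $f^*_R(k)=\bigcup_{n\ge0}f_R^n(k)$; the same definitions apply over the merged principal set $(P\setminus O)\cup\{o\}$. The merging function is: $\mathrm{Merge}(p)=o$ if $p\in O$ and $\mathrm{Merge}(p)=p$ otherwise; $\mathrm{Merge}(k)=\{(\mathrm{Merge}(p),v):(p,v)\in k\}$ for a state $k$; $\mathrm{Merge}(r)=(\mathrm{Merge}(p_b),v,\mathrm{Merge}(p_a),\mathrm{Merge}(k_a))$ for a rule $r=(p_b,v,p_a,k_a)$; and $\mathrm{Merge}(R)=\{\mathrm{Merge}(r):r\in R\}$. *)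

From Stdlib Require Import ClassicalDescription.

Definition state (X V : Type) := (X * V) -> Prop.
Definition subset {A : Type} (s t : A -> Prop) := forall a, s a -> t a.

Definition rule (X V : Type) := (X * V * X * state X V)%type.
Definition rules (X V : Type) := rule X V -> Prop.

Definition fR {X V : Type} (R : rules X V) (k : state X V) : state X V :=
  fun x => k x \/
    exists (pb : X) (v : V) (pa : X) (ka : state X V),
      x = (pa, v) /\ k (pb, v) /\ subset ka k /\ R (pb, v, pa, ka).

Fixpoint fR_iter {X V : Type} (R : rules X V) (n : nat) (k : state X V) : state X V :=
  match n with
  | O => k
  | S n' => fR R (fR_iter R n' k)
  end.

Definition fR_star {X V : Type} (R : rules X V) (k : state X V) : state X V :=
  fun x => exists n, fR_iter R n k x.

(* Merged principal set (P \ O) ∪ {o}, with o a new principal, modelled in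
   option P: None = o, Some p = p. *)
Definition mergeP {P : Type} (O : P -> Prop) (p : P) : option P :=
  if excluded_middle_informative (O p) then None else Some p.

Definition merge_state {P V : Type} (O : P -> Prop) (k : state P V)
  : state (option P) V :=
  fun x => exists p v, k (p, v) /\ x = (mergeP O p, v).

Definition merge_rule {P V : Type} (O : P -> Prop) (r : rule P V)
  : rule (option P) V :=
  match r with
  | (pb, v, pa, ka) => (mergeP O pb, v, mergeP O pa, merge_state O ka)
  end.

Definition merge_rules {P V : Type} (O : P -> Prop) (R : rules P V)
  : rules (option P) V :=
  fun r' => exists r, R r /\ r' = merge_rule O r.


(* Merging is the image under the map [mergeP O] on principals, and the image
   of a state under any map is sent into the closure of the image rules: a rule
   fired in the original system fires, with imaged premises, in the image. *)

Section ImageClosure.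

Variables (X Y V : Type) (m : X -> Y).

Definition image_state (k : state X V) : state Y V :=
  fun y => exists p v, k (p, v) /\ y = (m p, v).

Definition image_rule (r : rule X V) : rule Y V :=
  match r with
  | (pb, v, pa, ka) => (m pb, v, m pa, image_state ka)
  end.

Definition image_rules (R : rules X V) : rules Y V :=
  fun r' => exists r, R r /\ r' = image_rule r.

Lemma image_state_mono (k k' : state X V) :
  subset k k' -> subset (image_state k) (image_state k').
Proof.
  intros Hkk' y [p [v [Hk ->]]].
  exists p, v; split; auto.
Qed.

Lemma image_fR (R : rules X V) (k : state X V) :
  subset (image_state (fR R k)) (fR (image_rules R) (image_state k)).
Proof.
  intros y [p [v [[Hk | Hfire] ->]]].
  - left; exists p, v; split; auto.
  - destruct Hfire as [pb [v' [pa [ka [Heq [Hb [Hka HR]]]]]]].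
    injection Heq as -> ->.
    right; exists (m pb), v', (m pa), (image_state ka).
    split; [reflexivity |].
    split; [exists pb, v'; split; auto |].
    split; [exact (image_state_mono _ _ Hka) |].
    exists (pb, v', pa, ka); split; auto.
Qed.

End ImageClosure.

Arguments image_state {X Y V} m k _.
Arguments image_rules {X Y V} m R _.

Lemma fR_mono {X V : Type} (R : rules X V) {k k' : state X V} :
  subset k k' -> subset (fR R k) (fR R k').
Proof.
  intros Hkk' x [Hk | [pb [v [pa [ka [Heq [Hb [Hka HR]]]]]]]].
  - left; auto.
  - right; exists pb, v, pa, ka.
    repeat split; auto.
    intros y Hy; apply Hkk', Hka, Hy.
Qed.

Lemma image_fR_iter {X Y V : Type} (m : X -> Y) (R : rules X V)
  (k : state X V) (n : nat) :
  subset (image_state m (fR_iter R n k))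
         (fR_iter (image_rules m R) n (image_state m k)).
Proof.
  induction n as [| n IH]; simpl.
  - intros y Hy; exact Hy.
  - intros y Hy.
    apply (fR_mono _ IH), image_fR, Hy.
Qed.

Lemma image_fR_star {X Y V : Type} (m : X -> Y) (R : rules X V)
  (k : state X V) :
  subset (image_state m (fR_star R k))
         (fR_star (image_rules m R) (image_state m k)).
Proof.
  intros y [p [v [[n Hn] ->]]].
  exists n; apply image_fR_iter.
  exists p, v; split; auto.
Qed.

Theorem mainTheorem4 (P V : Type) (O : P -> Prop) (R : rules P V)
  (k0 : state P V) :
  subset (merge_state O (fR_star R k0))
         (fR_star (merge_rules O R) (merge_state O k0)).
Proof.
  exact (image_fR_star (mergeP O) R k0).
Qed.
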